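(* Let $K\ge2$, $p\in(0,1)$, $M>0$, and let $f\in\mathcal M_p$ with $\sigma_f$ equal to the identity (so item $1$ is top-ranked). Then the output of \textsc{NE} with parameter $M$ satisfies $$\mathbb P(i_{\mathrm{out}}\neq 1)\le (2^{K-1}-1)\,p^M.$$
   Context: Items are $[K]=\{1,\dots,K\}$, and $\mathcal S=\{S\subseteq[K]:|S|\ge 2\}$. A preference $f$ is a family of numbers $f(i\mid S)$, $S\in\mathcal S$, $i\in[K]$. For $p\in(0,1)$, the $p$-Separable family $\mathcal M_p$ consists of all $f$ such that (i) $f(i\mid S)>0$ iff $i\in S$; (ii) $\sum_{i\in S}f(i\mid S)=1$ for all $S\in\mathcal S$; (iii) there is a bijection $\sigma_f:[K]\to[K]$ (the ranking; $\sigma_f(i)=k$ means item $i$ is in $k$-th highest position) such that for all $S\in\mathcal S$ and $i,i'\in S$ with $\sigma_f(i')<\sigma_f(i)$, $f(i\mid S)\le p\, f(i'\mid S)$. Interaction model: at each time $t=1,2,\dots$ a display set $S_t\in\mathcal S$ is chosen based on the past, and a choice $X_t\in S_t$ is observed, which conditionally on the past and $S_t$ has distribution $f(\cdot\mid S_t)$. Algorithm \textsc{NE} (Nested Elimination) with parameter $M>0$: set $W_0(i)=0$ for all $i\in[K]$, $S_{\mathrm{active}}=[K]$, $t=0$. While $|S_{\mathrm{active}}|>1$: set $t\leftarrow t+1$; display $S_{\mathrm{active}}$ and observe $X_t$; set $W_t(X_t)=W_{t-1}(X_t)+1$ and $W_t(i)=W_{t-1}(i)$ for $i\ne X_t$;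 let $\pi_t:[|S_{\mathrm{active}}|]\to S_{\mathrm{active}}$ be a bijection with $W_t(\pi_t(1))\ge W_t(\pi_t(2))\ge\cdots$ (ties broken arbitrarily); find the smallest $k\in\{1,\dots,|S_{\mathrm{active}}|-1\}$ with $\sum_{i=1}^kW_t(\pi_t(i))-k\,W_t(\pi_t(k+1))\ge M$, and if it exists set $S_{\mathrm{active}}\leftarrow\{\pi_t(1),\dots,\pi_t(k)\}$. The stopping time $\tau$ is the final value of $t$ and $i_{\mathrm{out}}$ is the unique element of the final $S_{\mathrm{active}}$. *)

From HB Require Import structures.
From mathcomp Require Import all_boot all_order all_algebra.
From mathcomp Require Import reals exp.
Set Implicit Arguments. Unset Strict Implicit. Unset Printing Implicit Defensive.
Import Order.TTheory GRing.Theory Num.Theory.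
Local Open Scope ring_scope.

(* Items are 'I_K (item i of the paper is the ordinal with value i-1).
   A preference is f : 'I_K -> {set 'I_K} -> R, with f i S = f(i | S);
   only the values for #|S| >= 2 matter. *)

(* f is in the p-Separable family with ranking sigma (sigma i = position of
   item i, 0-indexed, so sigma i' < sigma i means i' ranks higher). *)
Definition pSeparable_with {R : realType} {K : nat} (p : R)
    (f : 'I_K -> {set 'I_K} -> R) (sigma : 'I_K -> 'I_K) : Prop :=
  bijective sigma /\
  forall S : {set 'I_K}, (2 <= #|S|)%N ->
    [/\ (forall i, 0 < f i S <-> i \in S),
        \sum_(i in S) f i S = 1 &
        (forall i i', i \in S -> i' \in S -> (sigma i' < sigma i)%N ->
                      f i S <= p * f i' S)].

Definition pSeparable {R : realType} {K : nat} (p : R)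
    (f : 'I_K -> {set 'I_K} -> R) : Prop :=
  exists sigma, pSeparable_with p f sigma.

Definition incrW {K : nat} (W : {ffun 'I_K -> nat}) (x : 'I_K) : {ffun 'I_K -> nat} :=
  [ffun i => (W i + (i == x))%N].

(* pi_t : the active items sorted by decreasing W (a fixed tie-breaking). *)
Definition ne_order {K : nat} (W : {ffun 'I_K -> nat}) (A : {set 'I_K}) : seq 'I_K :=
  sort (fun i j => W j <= W i)%N (enum A).

Definition ne_crit {R : realType} {K : nat} (W : {ffun 'I_K -> nat})
    (A : {set 'I_K}) (k : nat) : R :=
  let ws := map W (ne_order W A) in
  (sumn (take k ws))%:R - (k * nth 0%N ws k)%:R.

Definition ne_next {R : realType} {K : nat} (M : R) (W : {ffun 'I_K -> nat})
    (A : {set 'I_K}) : {set 'I_K} :=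
  match [seq k <- iota 1 (#|A| - 1) | M <= ne_crit W A k] with
  | k :: _ => [set i | i \in take k (ne_order W A)]
  | [::] => A
  end.

(* Probability, starting from state (W, A), that NE stops within T further
   rounds and outputs an item different from item 1 (the ordinal of value 0). *)
Fixpoint ne_err {R : realType} {K : nat} (f : 'I_K -> {set 'I_K} -> R) (M : R)
    (T : nat) (W : {ffun 'I_K -> nat}) (A : {set 'I_K}) {struct T} : R :=
  if (#|A| <= 1)%N then (if [exists i in A, val i != 0%N] then 1 else 0)
  else match T with
       | 0 => 0
       | T'.+1 => \sum_(x in A)
                    f x A * ne_err f M T' (incrW W x) (ne_next M (incrW W x) A)
       end.

(* P(tau <= T and i_out <> 1) for NE run from W_0 = 0, S_active = [K]. *)
Definition ne_err_by {R : realType} {K : nat} (f : 'I_K -> {set 'I_K} -> R)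
    (M : R) (T : nat) : R :=
  ne_err f M T [ffun => 0%N] [set: 'I_K].

From HB Require Import structures.
From mathcomp Require Import all_boot all_order all_algebra.
From mathcomp Require Import reals exp.
From mathcomp Require Import ring lra zify.
Import Order.TTheory GRing.Theory Num.Theory.
Local Open Scope ring_scope.

(* Write o for the top item and, for a set B of
   items ranked below o, gap_B(W) = sum_(b in B) (W b - W o).  The potential
     Phi(W, A) = sum over nonempty B included in A \ {o} of p ^ (M - gap_B(W))
   is a supermartingale: choosing x from f(. | A) multiplies p ^ (- gap_B) by
   p ^ |B| if x = o, by 1/p if x is in B and by 1 otherwise, and the geometric
   decay of f along the ranking gives (1 - p) f(B | A) <= p (1 - p ^ |B|) f(o | A),
   which makes the expected factor at most 1.  When NE discards o it keeps the
   k best items B, and gap_B(W) >= sum_(i <= k) W(pi i) - k W(pi (k+1)) >= M, so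
   Phi >= 1 at that moment.  Hence the error probability is at most
   Phi(0, [K]) = (2 ^ (K - 1) - 1) p ^ M. *)

Definition step_factor {R : fieldType} {n : nat} (p : R) (o : 'I_n)
    (B : {set 'I_n}) (x : 'I_n) : R :=
  if x == o then p ^+ #|B| else if x \in B then p^-1 else 1.

Section DecayingWeights.

Context {R : realFieldType} {n : nat}.
Variables (p : R) (q : 'I_n -> R) (A : {set 'I_n}).
Hypotheses (p_gt0 : 0 < p) (p_le1 : p <= 1).
Hypothesis q_decay : {in A &, forall i i' : 'I_n, (i' < i)%N -> q i <= p * q i'}.

Lemma decaying_sum_le {B : {set 'I_n}} {c : 'I_n} :
    B \subset A -> c \in A -> (forall b, b \in B -> (c < b)%N) ->
  (1 - p) * \sum_(b in B) q b <= p * (1 - p ^+ #|B|) * q c.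
Proof.
move: {2}#|B| (erefl #|B|) => k; elim: k B c => [|k IHk] B c cardB BA cA cB.
  move/eqP: cardB; rewrite cards_eq0 => /eqP ->.
  by rewrite big_set0 cards0 expr0 subrr !(mulr0, mul0r).
have [b0 b0B] : exists b0, b0 \in B by apply/set0Pn; rewrite -card_gt0 cardB.
have [b bB' bmin] := arg_minnP (fun i : 'I_n => val i) b0B.
have bB : b \in B := bB'.
have bA : b \in A := subsetP BA b bB.
have cardBb : #|B :\ b| = k by apply/eqP; rewrite -eqSS -cardB (cardsD1 b B) bB.
have IH : (1 - p) * \sum_(i in B :\ b) q i <= p * (1 - p ^+ k) * q b.
  rewrite -cardBb; apply: IHk => //; first exact: subset_trans (subD1set _ _) BA.
  move=> i; rewrite in_setD1 => /andP[ib iB]; rewrite ltn_neqAle bmin // andbT.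
  by apply: contraNneq ib => /val_inj ->.
have qbc : q b <= p * q c by apply: q_decay => //; exact: cB.
rewrite (big_setD1 b) //= cardB exprS mulrDr.
have pSk : 0 <= 1 - p * p ^+ k by rewrite subr_ge0 -exprS exprn_ile1 // ltW.
have := ler_wpM2r pSk qbc; lra.
Qed.

Lemma expected_step_factor_le1 (o : 'I_n) (B : {set 'I_n}) :
    \sum_(i in A) q i = 1 -> o \in A -> B \subset A ->
    (forall b, b \in B -> (o < b)%N) ->
  \sum_(x in A) q x * step_factor p o B x <= 1.
Proof.
move=> q1 oA BA oB.
have oNB : o \notin B by apply/negP => /oB; rewrite ltnn.
have BAo : B \subset A :\ o.
  apply/subsetP => b bB; rewrite in_setD1 (subsetP BA) // andbT.
  by apply: contraNneq oNB => <-.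
have splitA (F : 'I_n -> R) : \sum_(x in A) F x =
    F o + \sum_(x in B) F x + \sum_(x in (A :\ o) :\: B) F x.
  by rewrite (big_setD1 o) //= (big_setID B) /= (setIidPr BAo) addrA.
have sumB : \sum_(x in B) q x * step_factor p o B x = p^-1 * \sum_(x in B) q x.
  rewrite mulr_sumr; apply: eq_bigr => x xB; rewrite mulrC /step_factor xB ifF //.
  by apply: contraNF oNB => /eqP <-.
have sumRest : \sum_(x in (A :\ o) :\: B) q x * step_factor p o B x =
               \sum_(x in (A :\ o) :\: B) q x.
  apply: eq_bigr => x; rewrite !inE => /andP[xNB /andP[xo _]].
  by rewrite /step_factor (negbTE xo) (negbTE xNB) mulr1.
move: q1; rewrite !splitA sumB sumRest /step_factor eqxx.
have tail := decaying_sum_le BA oA oB.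
set QB := \sum_(x in B) q x in tail *.
have tail' : p^-1 * QB - QB <= (1 - p ^+ #|B|) * q o.
  have -> : p^-1 * QB - QB = p^-1 * ((1 - p) * QB) by field; rewrite gt_eqF.
  have -> : (1 - p ^+ #|B|) * q o = p^-1 * (p * (1 - p ^+ #|B|) * q o).
    by field; rewrite gt_eqF.
  by rewrite ler_wpM2l // invr_ge0 ltW.
lra.
Qed.

End DecayingWeights.

Lemma sum_nat_eq_mem (T : finType) (B : {set T}) (x : T) :
  (\sum_(b in B) nat_of_bool (b == x))%N = nat_of_bool (x \in B).
Proof.
have [xB | xNB] := boolP (x \in B).
  by rewrite (big_setD1 x) //= eqxx big1 // => b; rewrite in_setD1 => /andP[/negbTE ->].
by rewrite big1 // => b bB; case: eqP bB xNB => // -> ->.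
Qed.

Lemma sorted_drop_nth_ge (T : eqType) (w : T -> nat) (s : seq T) (x0 x : T) (k : nat) :
    sorted (fun i j => w j <= w i)%N s -> x \in drop k s ->
  (w x <= w (nth x0 s k))%N.
Proof.
move=> s_sorted; case: (ltnP k (size s)) => ks; last by rewrite drop_oversize.
have := drop_sorted k s_sorted; rewrite (drop_nth x0 ks) inE /= => sorted_tail.
case/predU1P => [-> //|xs].
have ge_trans : transitive (fun i j : T => w j <= w i)%N.
  by move=> y z t zy ty; apply: leq_trans ty zy.
exact: (allP (order_path_min ge_trans sorted_tail)).
Qed.

Definition gap {R : pzRingType} {K : nat} (W : {ffun 'I_K -> nat}) (o : 'I_K)
    (B : {set 'I_K}) : R :=
  (\sum_(b in B) W b)%:R - (#|B| * W o)%:R.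

Section NestedEliminationStep.

Context {R : realType} {K : nat}.
Implicit Types (W : {ffun 'I_K -> nat}) (A B : {set 'I_K}).

Lemma ne_order_sorted W A : sorted (fun i j => W j <= W i)%N (ne_order W A).
Proof. by apply: sort_sorted => i j; exact: leq_total. Qed.

Lemma mem_ne_order W A : ne_order W A =i A.
Proof. by move=> i; rewrite mem_sort mem_enum. Qed.

Lemma ne_order_uniq W A : uniq (ne_order W A).
Proof. by rewrite sort_uniq enum_uniq. Qed.

Lemma size_ne_order W A : size (ne_order W A) = #|A|.
Proof. by rewrite size_sort cardE. Qed.

Lemma ne_nextP (M : R) W A :
  ne_next M W A = A \/
  exists2 k, (k < #|A|)%N /\ M <= ne_crit W A k &
    ne_next M W A = [set i in take k (ne_order W A)].
Proof.
rewrite /ne_next; case E: [seq _ <- _ | _] => [|k ks]; [by left | right].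
have : k \in [seq k <- iota 1 (#|A| - 1) | M <= ne_crit W A k] by rewrite E mem_head.
rewrite mem_filter mem_iota => /andP[hM /andP[k_gt0 k_lt]]; exists k => //.
by split=> //; lia.
Qed.

Lemma ne_next_subset (M : R) W A : ne_next M W A \subset A.
Proof.
case: (ne_nextP M W A) => [-> // | [k _ ->]].
by apply/subsetP => i; rewrite inE => /mem_take; rewrite mem_ne_order.
Qed.

Lemma ne_crit_le_gap W A (o : 'I_K) (k : nat) :
    o \in A -> o \notin take k (ne_order W A) -> (k < #|A|)%N ->
  ne_crit W A k <= gap W o [set i in take k (ne_order W A)] :> R.
Proof.
move=> oA oNtake kA; set s := ne_order W A.
have ks : (k <= size s)%N by rewrite size_ne_order ltnW.
have cardB : #|[set i in take k s]| = k.
  by rewrite cardsE (card_uniqP _) ?size_takel // take_uniq ?ne_order_uniq.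
have sumB : (\sum_(i in [set i in take k s]) W i = sumn (take k (map W s)))%N.
  rewrite -map_take sumnE big_map (big_uniq _ (take_uniq k (ne_order_uniq W A))).
  by apply: eq_bigl => i; rewrite inE.
have Wo : (W o <= nth 0 (map W s) k)%N.
  have o_drop : o \in drop k s.
    have : o \in take k s ++ drop k s by rewrite cat_take_drop mem_ne_order.
    by rewrite mem_cat (negbTE oNtake).
  rewrite (nth_map o) ?size_ne_order //.
  exact: sorted_drop_nth_ge (ne_order_sorted W A) o_drop.
by rewrite /ne_crit /gap cardB sumB lerB // ler_nat leq_mul2l Wo orbT.
Qed.

Lemma ne_next_gap (M : R) W A (o : 'I_K) :
  o \in A -> o \notin ne_next M W A -> M <= gap W o (ne_next M W A).
Proof.
move=> oA; case: (ne_nextP M W A) => [-> | [k [kA hM] ->]]; first by rewrite oA.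
by rewrite inE => oNtake; apply: le_trans hM _; exact: ne_crit_le_gap.
Qed.

End NestedEliminationStep.

Lemma card_nonempty_subsets (T : finType) (S : {set T}) :
  #|[pred B : {set T} | (B \subset S) && (B != set0)]| = (2 ^ #|S| - 1)%N.
Proof.
have := cardD1 set0 (powerset S); rewrite powersetE sub0set add1n card_powerset => ->.
by rewrite subn1 /=; apply: eq_card => B; rewrite !inE andbC.
Qed.

Definition potential {R : realType} {K : nat} (p M : R) (o : 'I_K)
    (W : {ffun 'I_K -> nat}) (B : {set 'I_K}) : R :=
  p `^ (M - gap W o B).

Definition potential_sum {R : realType} {K : nat} (p M : R) (o : 'I_K)
    (W : {ffun 'I_K -> nat}) (A : {set 'I_K}) : R :=
  \sum_(B : {set 'I_K} | (B \subset A :\ o) && (B != set0)) potential p M o W B.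

Section Potential.

Context {R : realType} {K : nat}.
Variables (p M : R) (o : 'I_K).
Hypotheses (p_gt0 : 0 < p) (p_le1 : p <= 1).
Implicit Types (W : {ffun 'I_K -> nat}) (A B : {set 'I_K}).

Lemma gap_incrW W B x :
  gap (incrW W x) o B = gap W o B + (x \in B)%:R - (#|B| * (x == o))%:R :> R.
Proof.
rewrite /gap /incrW ffunE (eq_bigr (fun b => W b + (b == x))%N); last first.
  by move=> b _; rewrite ffunE.
by rewrite big_split /= sum_nat_eq_mem eq_sym mulnDr !natrD; ring.
Qed.

Lemma potential_incrW W B x : o \notin B ->
  potential p M o (incrW W x) B = potential p M o W B * step_factor p o B x.
Proof.
move=> oNB; rewrite /potential gap_incrW.
have -> : M - (gap W o B + (x \in B)%:R - (#|B| * (x == o))%:R) =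
          (M - gap W o B) + ((#|B| * (x == o))%:R - (x \in B)%:R) by ring.
rewrite powRD ?(gt_eqF p_gt0) ?implybT //; congr (_ * _); rewrite /step_factor.
have [-> | _] := eqVneq x o.
  by rewrite (negbTE oNB) muln1 subr0 powR_mulrn ?ltW.
rewrite muln0 sub0r; case: (x \in B); first by rewrite powR_inv1 ?ltW.
by rewrite oppr0 powRr0.
Qed.

Lemma potential_ge0 W B : 0 <= potential p M o W B.
Proof. exact: powR_ge0. Qed.

Lemma potential_ge1 W B : M <= gap W o B -> 1 <= potential p M o W B.
Proof.
move=> gapM; rewrite /potential -(powRr0 p).
by apply: ger_powR; [rewrite p_gt0 | rewrite subr_le0].
Qed.

Lemma potential_sum_ge0 W A : 0 <= potential_sum p M o W A.
Proof. by apply: sumr_ge0 => B _; exact: potential_ge0. Qed.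

Lemma potential_sum_subset W A A' :
  A' \subset A -> potential_sum p M o W A' <= potential_sum p M o W A.
Proof.
move=> A'A; rewrite /potential_sum [leLHS]big_mkcond [leRHS]big_mkcond /=.
apply: ler_sum => B _; case: ifPn => [/andP[BA' ->] | _].
  by rewrite (subset_trans BA' (setSD _ A'A)).
by case: ifP => _ //; exact: potential_ge0.
Qed.

Lemma potential_le_sum W {A B} :
  B \subset A :\ o -> B != set0 -> potential p M o W B <= potential_sum p M o W A.
Proof.
move=> BA B0; rewrite /potential_sum (bigD1 B) /=; last by rewrite BA B0.
by rewrite lerDl sumr_ge0 // => C _; exact: potential_ge0.
Qed.

Lemma potential_sum_init :
  potential_sum p M o [ffun => 0%N] [set: 'I_K] = (2 ^ K.-1 - 1)%:R * p `^ M.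
Proof.
have gap0 B : gap [ffun => 0%N] o B = 0 :> R.
  by rewrite /gap big1 ?ffunE ?muln0 ?subrr // => i _; rewrite ffunE.
rewrite /potential_sum (eq_bigr (fun=> p `^ M)) => [|B _]; last first.
  by rewrite /potential gap0 subr0.
set nonempty := [pred B : {set 'I_K} | (B \subset [set: 'I_K] :\ o) && (B != set0)].
rewrite (eq_bigl [in nonempty]) // sumr_const card_nonempty_subsets.
by rewrite setTD cardsC1 card_ord mulr_natl.
Qed.

End Potential.

Lemma pSeparable_distribution {R : realType} {K : nat} {p : R}
    {f : 'I_K -> {set 'I_K} -> R} {sigma : 'I_K -> 'I_K} {A : {set 'I_K}} :
    pSeparable_with p f sigma -> (2 <= #|A|)%N ->
  {in A, forall i, 0 <= f i A} /\ \sum_(i in A) f i A = 1.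
Proof.
move=> [_ f_sep] A2; have [f_pos f_sum _] := f_sep A A2.
by split=> // i iA; apply/ltW/f_pos.
Qed.

Section ErrorBound.

Context {R : realType} {K : nat}.
Variables (p M : R) (f : 'I_K -> {set 'I_K} -> R) (o : 'I_K).
Hypotheses (p_gt0 : 0 < p) (p_le1 : p <= 1) (M_gt0 : 0 < M) (o_top : val o = 0%N).
Hypothesis f_sep : pSeparable_with p f id.
Implicit Types (W : {ffun 'I_K -> nat}) (A B : {set 'I_K}).

Lemma ne_err_le1 T W A : ne_err f M T W A <= 1.
Proof.
elim: T W A => [|T IH] W A /=; case: ifPn => [_ | ]; try by case: ifP.
  by rewrite ler01.
rewrite -ltnNge => A2; have [f_ge0 f_sum] := pSeparable_distribution f_sep A2.
rewrite -f_sum ler_sum // => x xA.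
by rewrite ler_piMr ?f_ge0 ?IH.
Qed.

Lemma ne_err_card_le1 T W A : o \in A -> (#|A| <= 1)%N -> ne_err f M T W A = 0.
Proof.
move=> oA A1; have A_o : A = [set o].
  by apply/eqP; rewrite eq_sym eqEcard sub1set oA cards1 A1.
have only_top : [exists i in A, val i != 0%N] = false.
  by apply/existsP => -[i]; rewrite A_o inE => /andP[/eqP ->]; rewrite o_top.
by case: T => /=; rewrite A1 only_top.
Qed.

Lemma top_lt_subset {B A} :
  B \subset A :\ o -> forall b, b \in B -> (o < b)%N.
Proof.
move=> BAo b /(subsetP BAo); rewrite in_setD1 o_top lt0n => /andP[bo _].
by apply: contraNneq bo => b0; apply/eqP/ord_inj; rewrite b0; exact/esym/o_top.
Qed.

Lemma potential_sum_supermartingale W A : o \in A -> (2 <= #|A|)%N ->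
  \sum_(x in A) f x A * potential_sum p M o (incrW W x) A
    <= potential_sum p M o W A.
Proof.
move=> oA A2; have [f_ge0 f_sum] := pSeparable_distribution f_sep A2.
have [_ /(_ A A2)[_ _ f_decay]] := f_sep.
rewrite /potential_sum; under eq_bigr do rewrite mulr_sumr.
rewrite exchange_big /=; apply: ler_sum => B /andP[BAo _].
have oB := top_lt_subset BAo.
have oNB : o \notin B by apply/negP => /oB; rewrite ltnn.
under eq_bigr => x _ do rewrite potential_incrW // mulrCA.
rewrite -mulr_sumr ler_piMr ?potential_ge0 //.
apply: expected_step_factor_le1 => //.
exact: subset_trans BAo (subD1set _ _).
Qed.

Lemma ne_err_le_potential_sum T W A :
  o \in A -> ne_err f M T W A <= potential_sum p M o W A.
Proof.
elim: T W A => [|T IH] W A oA;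
  (have [A1 | A2] := leqP #|A| 1; first by rewrite ne_err_card_le1 // potential_sum_ge0);
  rewrite /= leqNgt A2 /=; first exact: potential_sum_ge0.
have [f_ge0 _] := pSeparable_distribution f_sep A2.
apply: le_trans (potential_sum_supermartingale W A oA A2).
apply: ler_sum => x xA; apply: ler_wpM2l; first exact: f_ge0.
set W' := incrW W x; set A' := ne_next M W' A.
have [oA' | oNA'] := boolP (o \in A').
  apply: le_trans (IH W' A' oA') _.
  by apply: potential_sum_subset; exact: ne_next_subset.
have gapM : M <= gap W' o A' by exact: ne_next_gap.
have A'Ao : A' \subset A :\ o.
  apply/subsetP => i iA'; rewrite in_setD1 andbC.
  rewrite (subsetP (ne_next_subset M W' A) i iA').
  by apply: contraNneq oNA' => <-.
have A'0 : A' != set0.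
  by apply: contraTneq gapM => ->; rewrite /gap big_set0 cards0 subrr -ltNge.
apply: le_trans (ne_err_le1 _ _ _) _.
apply: le_trans (potential_le_sum p M o W' A'Ao A'0).
exact: potential_ge1.
Qed.

End ErrorBound.

Theorem mainTheorem3 (R : realType) (K : nat) (p M : R)
    (f : 'I_K -> {set 'I_K} -> R) :
  (2 <= K)%N -> 0 < p -> p < 1 -> 0 < M ->
  pSeparable_with p f id ->
  forall T : nat,
    ne_err_by f M T <= (2 ^ K.-1 - 1)%:R * (p `^ M).
Proof.
move=> K2 p_gt0 p_lt1 M_gt0 f_sep T.
pose top : 'I_K := Ordinal (ltnW K2).
rewrite /ne_err_by -(potential_sum_init p M top).
by apply: ne_err_le_potential_sum (in_setT top) => //; exact: ltW.
Qed.
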